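(* Let $R$ be a $*$-reducing ring, let $p,q\in R$ be projections, and put $\overline{p}=1-p$, $\overline{q}=1-q$. Then the following are equivalent: (1) $p+q-pq$ is MP invertible; (2) $p+\overline{p}q\overline{p}$ is MP invertible; (3) $\overline{p}q\overline{p}$ is MP invertible; (4) $q-pq$ is MP invertible; (5) $q-qp$ is MP invertible; (6) $p+q-qp$ is MP invertible; (7) $q+\overline{q}p\overline{q}$ is MP invertible; (8) $\overline{q}p\overline{q}$ is MP invertible; (9) $p-qp$ is MP invertible; (10) $p-pq$ is MP invertible.
   Context: $R$ is an associative ring with identity $1$ and an involution $a\mapsto a^*$ (satisfying $(a^* )^*=a$, $(a+b)^*=a^*+b^*$, $(ab)^*=b^*a^*$). $R$ is $*$-reducing if $a^*a=0$ implies $a=0$ for all $a\in R$. An element $a$ is MP invertible if there is $b$ with $aba=a$, $bab=b$, $(ab)^*=ab$, $(ba)^*=ba$; this $b$ is unique and written $a^{\dagger}$. A projection is an element $p$ with $p^2=p=p^*$. *)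

From mathcomp Require Import all_boot all_algebra.
Set Implicit Arguments. Unset Strict Implicit. Unset Printing Implicit Defensive.
Import GRing.Theory.
Local Open Scope ring_scope.

Definition is_involution (R : pzRingType) (star : R -> R) : Prop :=
  [/\ forall a, star (star a) = a,
      forall a b, star (a + b) = star a + star b &
      forall a b, star (a * b) = star b * star a].

Definition star_reducing (R : pzRingType) (star : R -> R) : Prop :=
  forall a : R, star a * a = 0 -> a = 0.

Definition is_projection (R : pzRingType) (star : R -> R) (p : R) : Prop :=
  p * p = p /\ star p = p.

Definition MP_invertible (R : pzRingType) (star : R -> R) (a : R) : Prop :=
  exists b : R, [/\ a * b * a = a, b * a * b = b,
                    star (a * b) = a * b & star (b * a) = b * a].

From mathcomp Require Import all_boot all_algebra.
Set Implicit Arguments. Unset Strict Implicit. Unset Printing Implicit Defensive.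
Import GRing.Theory.
Local Open Scope ring_scope.

(* Write p' = 1 - p, C = p'qp' and d = p'q = q - pq, so that C = d d^*.  In a
   *-reducing ring x is MP invertible iff x x^* is, which gives (3) <-> (4).
   With respect to 1 = p + p', the element p + q - pq = p + p'qp + C is block
   lower triangular with diagonal blocks p and C, and p + C is block diagonal,
   so an MP inverse of C yields explicit MP inverses of both.  Conversely the
   range condition x \in x x^* R passes from these elements to C, because
   p + q - pq = (1 + p'qp)(p + C) with p'qp of square zero.  Adjoints and the
   symmetry p <-> q give the remaining items. *)

Definition is_MP_inverse (R : pzRingType) (star : R -> R) (a b : R) : Prop :=
  [/\ a * b * a = a, b * a * b = b, star (a * b) = a * b & star (b * a) = b * a].

Lemma orthogonal_sq_range (R : pzRingType) (p c y : R) :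
  p * p = p -> p * c = 0 -> c * p = 0 ->
  p + c = (p + c) * (p + c) * y -> c = c * c * y.
Proof.
move=> pp pc cp e.
have cE : c = (1 - p) * (p + c) by rewrite mulrBl mul1r mulrDr pp pc addr0 addrAC subrr add0r.
by rewrite {1}cE e !mulrA -cE mulrDr cp add0r.
Qed.

Lemma unipotent_inv (R : pzRingType) (n : R) : n * n = 0 -> (1 - n) * (1 + n) = 1.
Proof. by move=> nn; rewrite mulrDr mulr1 mulrBl mul1r nn subr0 subrK. Qed.

Section Involution.

Variables (R : pzRingType) (star : R -> R).
Hypothesis star_inv : is_involution star.

Lemma starK : involutive star. Proof. by case: star_inv. Qed.

Lemma starD x y : star (x + y) = star x + star y. Proof. by case: star_inv. Qed.

Lemma starM x y : star (x * y) = star y * star x. Proof. by case: star_inv. Qed.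

Lemma starB x y : star (x - y) = star x - star y.
Proof. by apply: (addIr (star y)); rewrite -starD !subrK. Qed.

Lemma star0 : star 0 = 0. Proof. by rewrite -{1}(subrr 0) starB subrr. Qed.

Lemma star1 : star 1 = 1.
Proof. by rewrite -[star 1]mulr1 -{2}(starK 1) -starM mulr1 starK. Qed.

Lemma is_MP_inverse_star a b :
  is_MP_inverse star a b -> is_MP_inverse star (star a) (star b).
Proof.
case=> aba bab ab ba.
by split; rewrite -!starM ?mulrA ?aba ?bab ?ab ?ba.
Qed.

Lemma MP_invertible_starE a : MP_invertible star (star a) <-> MP_invertible star a.
Proof.
suff MPstar x : MP_invertible star x -> MP_invertible star (star x).
  by split=> /MPstar //; rewrite starK.
by case=> y /is_MP_inverse_star; exists (star y).
Qed.

Lemma is_MP_inverse_range a b : is_MP_inverse star a b -> a = a * star a * star b.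
Proof. by case=> aba _ _ ba; rewrite -mulrA -starM ba mulrA aba. Qed.

Lemma is_MP_inverse_selfadj c r :
  star c = c -> c = c * c * r -> is_MP_inverse star c (star r * c * r).
Proof.
move=> sc ccr.
(* [c r = r^* c], so [r^* c r] is the group inverse of [c]. *)
have rcc : c = star r * c * c by rewrite -{1}sc {1}ccr !starM sc mulrA.
have cr : c * r = star r * c by rewrite {1}rcc -!mulrA (mulrA c) -ccr.
have bE : star r * c * r = c * r * r by rewrite -cr.
have bE' : star r * c * r = star r * star r * c by rewrite -mulrA cr mulrA.
have cb : c * (star r * c * r) = c * r by rewrite bE !mulrA -ccr.
have bc : star r * c * r * c = c * r by rewrite bE' -!mulrA (mulrA (star r) c) -rcc cr.
split; rewrite ?cb ?bc.
- by rewrite cr -rcc.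
- by rewrite cr -mulrA cb mulrA.
- by rewrite starM sc cr.
- by rewrite starM sc cr.
Qed.

Lemma MP_invertible_selfadj c :
  star c = c -> MP_invertible star c <-> exists r, c = c * c * r.
Proof.
move=> sc; split=> [[b /is_MP_inverse_range cE] | [r ccr]].
  by exists (star b); rewrite sc in cE.
by exists (star r * c * r); apply: is_MP_inverse_selfadj.
Qed.

Lemma is_MP_inverse_mul_adj a b :
  is_MP_inverse star a b -> is_MP_inverse star (a * star a) (star b * b).
Proof.
case=> aba bab ab ba.
have aab : a * star a * star b = a by rewrite -mulrA -starM ba mulrA aba.
have baa : b * a * star a = star a.
  by have := congr1 star aab; rewrite !starM !starK mulrA.
have abb : a * b * star b = star b by rewrite -ab -starM mulrA bab.
have ba' : star b * star a = a * b by rewrite -starM ab.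
split; rewrite !mulrA.
- by rewrite aab -(mulrA _ b) -(mulrA _ (b * a)) baa.
- by rewrite -(mulrA _ b a) -(mulrA _ (b * a)) baa ba' abb.
- by rewrite aab.
- by rewrite -(mulrA _ b a) -(mulrA _ (b * a)) baa ba' ab.
Qed.

Lemma is_MP_inverse_orthogonal p c h :
  star p = p -> p * c = 0 -> c * p = 0 -> is_MP_inverse star c h ->
  p * h = 0 /\ h * p = 0.
Proof.
move=> sp pc cp [_ hch sch shc].
have hE : h = h * star h * star c by rewrite -mulrA -starM sch mulrA hch.
have hE' : h = star c * star h * h by rewrite -starM shc hch.
split; [rewrite hE' !mulrA -sp -starM cp | rewrite hE -mulrA -sp -starM pc].
  by rewrite star0 !mul0r.
by rewrite star0 !mulr0.
Qed.

(* The block matrix [[p, 0], [B, c]] has MP inverse [[p, 0], [-h B, h]]. *)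
Lemma is_MP_inverse_add_lower p B c h :
  p * p = p -> star p = p -> p * B = 0 -> B * p = B -> p * c = 0 -> c * p = 0 ->
  is_MP_inverse star c h -> c * h * B = B ->
  is_MP_inverse star (p + B + c) (p + h - h * B).
Proof.
move=> pp sp pB Bp pc cp hc chB.
have [ph hp] := is_MP_inverse_orthogonal sp pc cp hc.
case: hc => chc hch sch shc.
have Bh : B * h = 0 by rewrite -Bp -mulrA ph mulr0.
have BB : B * B = 0 by rewrite -{1}Bp -mulrA pB mulr0.
have Bc : B * c = 0 by rewrite -Bp -mulrA pc mulr0.
have ab : (p + B + c) * (p + h - h * B) = p + c * h.
  rewrite !(mulrDl, mulrDr, mulrN) !mulrA pp ph Bp Bh cp chB.
  rewrite !(mul0r, oppr0, addr0, add0r).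
  by rewrite -addrA [B + _]addrC subrK.
have ba : (p + h - h * B) * (p + B + c) = p + h * c.
  rewrite !(mulrDl, mulrDr, mulrN, mulNr) -!mulrA pp pB pc hp Bp BB Bc.
  rewrite !(mulr0, oppr0, addr0, add0r).
  by rewrite [h * B + _]addrC addrA addrK.
split; rewrite ?ab ?ba.
- rewrite !(mulrDl, mulrDr) pp pB pc -(mulrA c h p) hp chB chc.
  by rewrite !(mulr0, addr0, add0r) addrA.
- rewrite !(mulrDl, mulrDr, mulrN) ?mulrA pp ph -(mulrA h c p) cp hch.
  by rewrite !(mulr0, mul0r, oppr0, addr0, add0r) addrA.
- by rewrite starD sp sch.
- by rewrite starD sp shc.
Qed.

Hypothesis star_red : star_reducing star.

Lemma mul_adj_eq0 y x : y * (x * star x) = 0 -> y * x = 0.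
Proof.
rewrite mulrA => yxx; rewrite -[y * x]starK.
have /star_red -> : star (star (y * x)) * star (y * x) = 0.
  by rewrite starK starM mulrA yxx mul0r.
exact: star0.
Qed.

Lemma MP_invertible_mul_adj a : MP_invertible star (a * star a) <-> MP_invertible star a.
Proof.
split=> [[g hg] | [b /is_MP_inverse_mul_adj hb]]; last by exists (star b * b).
have sC : star (a * star a) = a * star a by rewrite starM starK.
have [r Cr] : exists r, a * star a = a * star a * (a * star a) * r.
  by apply/(MP_invertible_selfadj sC); exists g.
have [ChC hCh sCh _] := is_MP_inverse_selfadj sC Cr.
have sh : star (star r * (a * star a) * r) = star r * (a * star a) * r.
  by rewrite starM (starM (star r)) sC starK mulrA.
move: (star r * _ * r) sh ChC hCh sCh => h sh ChC hCh sCh.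
have Cha : a * star a * h * a = a.
  apply/eqP; rewrite -subr_eq0 -[X in _ - X]mul1r -mulrBl; apply/eqP/mul_adj_eq0.
  by rewrite mulrBl mul1r ChC subrr.
exists (star a * h); split.
- by rewrite mulrA Cha.
- by rewrite -!mulrA (mulrA a) (mulrA h) hCh.
- by rewrite mulrA sCh.
- by rewrite !starM starK sh mulrA.
Qed.

Section Projections.

Variables p q : R.
Hypotheses (pp : p * p = p) (sp : star p = p) (qq : q * q = q) (sq : star q = q).

Local Notation pb := (1 - p).
Local Notation MP := (MP_invertible star).

Let ppb : p * pb = 0. Proof. by rewrite mulrBr mulr1 pp subrr. Qed.
Let pbp : pb * p = 0. Proof. by rewrite mulrBl mul1r pp subrr. Qed.
Let pbpb : pb * pb = pb. Proof. by rewrite mulrBl mul1r ppb subr0. Qed.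
Let spb : star pb = pb. Proof. by rewrite starB star1 sp. Qed.

Let pC : p * (pb * q * pb) = 0. Proof. by rewrite !mulrA ppb !mul0r. Qed.
Let Cp : pb * q * pb * p = 0. Proof. by rewrite -mulrA pbp mulr0. Qed.
Let sC : star (pb * q * pb) = pb * q * pb.
Proof. by rewrite !starM spb sq mulrA. Qed.
Let C_mul_adj : pb * q * pb = pb * q * star (pb * q).
Proof. by rewrite starM sq spb mulrA -(mulrA pb q q) qq. Qed.

Lemma MP_corner_of_range r :
  p + pb * q * pb = (p + pb * q * pb) * (p + pb * q * pb) * r -> MP (pb * q * pb).
Proof.
move/(orthogonal_sq_range pp pC Cp) => Cr.
by apply/(MP_invertible_selfadj sC); exists r.
Qed.

Lemma MP_sub_iff_corner : MP (q - p * q) <-> MP (pb * q * pb).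
Proof.
rewrite C_mul_adj -{1}[q]mul1r -mulrBl.
exact: iff_sym (MP_invertible_mul_adj _).
Qed.

Lemma MP_add_corner_iff : MP (p + pb * q * pb) <-> MP (pb * q * pb).
Proof.
have sA : star (p + pb * q * pb) = p + pb * q * pb by rewrite starD sp sC.
split=> [/(MP_invertible_selfadj sA) [r] | [h hC]]; first exact: MP_corner_of_range.
exists (p + h - h * 0).
have := is_MP_inverse_add_lower pp sp (mulr0 p) (mul0r p) pC Cp hC (mulr0 _).
by rewrite addr0.
Qed.

Lemma MP_join_iff_corner : MP (p + q - p * q) <-> MP (pb * q * pb).
Proof.
have pB : p * (pb * q * p) = 0 by rewrite !mulrA ppb !mul0r.
have Bp : pb * q * p * p = pb * q * p by rewrite -mulrA pp.
have BB : pb * q * p * (pb * q * p) = 0.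
  by rewrite !mulrA -(mulrA _ p pb) ppb mulr0 !mul0r.
have BC : pb * q * p * (pb * q * pb) = 0.
  by rewrite !mulrA -(mulrA _ p pb) ppb mulr0 !mul0r.
have joinE : p + q - p * q = p + pb * q * p + pb * q * pb.
  by rewrite -!addrA -mulrDr [p + pb]addrC subrK mulr1 mulrBl mul1r.
have unitE : p + pb * q * p + pb * q * pb = (1 + pb * q * p) * (p + pb * q * pb).
  by rewrite (mulrDl 1 (pb * q * p)) mul1r (mulrDr (pb * q * p)) Bp BC addr0 addrAC.
(* Left multiplication by the unit 1 + p'qp preserves the range condition. *)
have unipotent := unipotent_inv BB.
rewrite joinE; split.
- case=> b /is_MP_inverse_range; rewrite unitE starM starD sp sC.
  move=> /(congr1 ( *%R (1 - pb * q * p))).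
  rewrite !mulrA unipotent !mul1r => e.
  by apply: (@MP_corner_of_range (star (1 + pb * q * p) * star b)); rewrite mulrA.
- case=> h hC; exists (p + h - h * (pb * q * p)).
  apply: is_MP_inverse_add_lower => //.
  have [ChC _ _ _] := hC.
  have /mul_adj_eq0 : (pb * q * pb * h - 1) * (pb * q * star (pb * q)) = 0.
    by rewrite -C_mul_adj mulrBl ChC mul1r subrr.
  rewrite mulrBl mul1r => /eqP; rewrite subr_eq0 => /eqP Chd.
  by rewrite mulrA Chd.
Qed.

Lemma MP_corner_tfae :
  [<-> MP (p + q - p * q); MP (p + pb * q * pb); MP (pb * q * pb); MP (q - p * q)].
Proof.
by tfae=> [/MP_join_iff_corner/MP_add_corner_iff | /MP_add_corner_iff
       | /MP_sub_iff_corner | /MP_sub_iff_corner/MP_join_iff_corner].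
Qed.

End Projections.

End Involution.

Theorem corollary2p6 (R : pzRingType) (star : R -> R)
  (Hinv : is_involution star) (Hred : star_reducing star)
  (p q : R) (Hp : is_projection star p) (Hq : is_projection star q) :
  let pb := 1 - p in let qb := 1 - q in
  [<-> MP_invertible star (p + q - p * q);
       MP_invertible star (p + pb * q * pb);
       MP_invertible star (pb * q * pb);
       MP_invertible star (q - p * q);
       MP_invertible star (q - q * p);
       MP_invertible star (p + q - q * p);
       MP_invertible star (q + qb * p * qb);
       MP_invertible star (qb * p * qb);
       MP_invertible star (p - q * p);
       MP_invertible star (p - p * q)].
Proof.
move=> pb qb; case: Hp => pp sp; case: Hq => qq sq.
have P := MP_corner_tfae Hinv Hred pp sp qq sq.
have Q := MP_corner_tfae Hinv Hred qq sq pp sp; rewrite [q + p]addrC in Q.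
have adjoint a b : star a = b -> MP_invertible star a <-> MP_invertible star b.
  by move=> <-; apply: iff_sym (MP_invertible_starE Hinv a).
have S16 : MP_invertible star (p + q - p * q) <-> MP_invertible star (p + q - q * p).
  by apply: adjoint; rewrite (starB Hinv) (starD Hinv) (starM Hinv) sp sq.
have S45 : MP_invertible star (q - p * q) <-> MP_invertible star (q - q * p).
  by apply: adjoint; rewrite (starB Hinv) (starM Hinv) sp sq.
have S910 : MP_invertible star (p - q * p) <-> MP_invertible star (p - p * q).
  by apply: adjoint; rewrite (starB Hinv) (starM Hinv) sp sq.
by tfae=> [/(P 0 1) | /(P 1 2) | /(P 2 3) | /S45 | /S45/(P 3 0)/S16
          | /(Q 0 1) | /(Q 1 2) | /(Q 2 3) | /S910 | /S910/(Q 3 0)/S16].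
Qed.
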